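(* Let $\mathbf M$ be a model category with Postnikov presentation $(\mathsf X,\mathsf Z)$, let $\mathbf C$ be a category with all finite limits and colimits, and let $F:\mathbf C\rightleftarrows\mathbf M:G$ be an adjunction with $F$ left adjoint. Put $\mathsf W=F^{-1}(\mathsf{WE}_{\mathbf M})$ and $\mathsf C=F^{-1}(\mathsf{Cof}_{\mathbf M})$. If $\mathsf{Post}_{G(\mathsf Z)}\subset\mathsf W$ and every morphism $f$ of $\mathbf C$ factors (a) as $f=pi$ with $i\in\mathsf C$ and $p\in\mathsf{Post}_{G(\mathsf Z)}$, and (b) as $f=qj$ with $j\in\mathsf C\cap\mathsf W$ and $q\in\mathsf{Post}_{G(\mathsf X)}$, then $\mathsf W$, $\mathsf C$ and $\widehat{\mathsf{Post}_{G(\mathsf X)}}$ are the weak equivalences, cofibrations and fibrations of a model category structure on $\mathbf C$, with respect to which $F\dashv G$ is a Quillen pair.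
   Context: For a set $\mathsf S$ of morphisms in a category, an $\mathsf S$-Postnikov tower is a morphism $\lim_{\beta<\lambda}Y_\beta\to Y_0$ (whenever this limit exists), where $\lambda$ is an ordinal and $Y:\lambda^{op}\to$ (the category) is a functor such that for each $\beta$ with $\beta+1<\lambda$ the map $Y_{\beta+1}\to Y_\beta$ is a pullback of some $x_{\beta+1}:X_{\beta+1}\to X_\beta$ in $\mathsf S$ along some morphism $Y_\beta\to X_\beta$, and $Y_\gamma=\lim_{\beta<\gamma}Y_\beta$ for every limit ordinal $\gamma<\lambda$. $\mathsf{Post}_{\mathsf S}$ is the set of these; $\widehat{\mathsf S}$ is the set of retracts of elements of $\mathsf S$; $G(\mathsf S)=\{G(s):s\in\mathsf S\}$. A Postnikov presentation of $\mathbf M$ is a pair $(\mathsf X,\mathsf Z)$ with $\mathsf{Fib}_{\mathbf M}=\widehat{\mathsf{Post}_{\mathsf X}}$, $\mathsf{Fib}_{\mathbf M}\cap\mathsf{WE}_{\mathbf M}=\widehat{\mathsf{Post}_{\mathsf Z}}$, and such that every morphism of $\mathbf M$ factors as a cofibration followed by an element of $\mathsf{Post}_{\mathsf Z}$, and as an acyclic cofibration followed by an element of $\mathsf{Post}_{\mathsf X}$. A Quillen pair is an adjunction whose left adjoint preserves cofibrations and whose right adjoint preserves fibrations. *)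

Set Implicit Arguments.
Unset Strict Implicit.

Record Category := {
  Ob : Type;
  Hom : Ob -> Ob -> Type;
  idm : forall a, Hom a a;
  comp : forall a b c, Hom b c -> Hom a b -> Hom a c;
  comp_id_l : forall a b (f : Hom a b), comp (idm b) f = f;
  comp_id_r : forall a b (f : Hom a b), comp f (idm a) = f;
  comp_assoc : forall a b c d (f : Hom a b) (g : Hom b c) (h : Hom c d),
      comp h (comp g f) = comp (comp h g) f
}.

Arguments Hom {C} a b : rename.
Arguments idm {C} a : rename.
Arguments comp {C a b c} g f : rename.

Notation "g ∘ f" := (comp g f) (at level 40, left associativity).

Definition MorClass (C : Category) := forall a b : Ob C, Hom a b -> Prop.

Definition SubClass {C : Category} (S T : MorClass C) : Prop :=
  forall a b (f : Hom a b), S a b f -> T a b f.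

Definition ClassEq {C : Category} (S T : MorClass C) : Prop :=
  forall a b (f : Hom a b), S a b f <-> T a b f.

Definition ClassInter {C : Category} (S T : MorClass C) : MorClass C :=
  fun a b f => S a b f /\ T a b f.

Definition IsPullback {C : Category} {a b c P : Ob C}
  (f : Hom a c) (g : Hom b c) (p1 : Hom P a) (p2 : Hom P b) : Prop :=
  f ∘ p1 = g ∘ p2 /\
  forall Q (q1 : Hom Q a) (q2 : Hom Q b), f ∘ q1 = g ∘ q2 ->
    exists u : Hom Q P, (p1 ∘ u = q1 /\ p2 ∘ u = q2) /\
      forall u' : Hom Q P, p1 ∘ u' = q1 -> p2 ∘ u' = q2 -> u' = u.

Definition IsPushout {C : Category} {a b c P : Ob C}
  (f : Hom c a) (g : Hom c b) (i1 : Hom a P) (i2 : Hom b P) : Prop :=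
  i1 ∘ f = i2 ∘ g /\
  forall Q (q1 : Hom a Q) (q2 : Hom b Q), q1 ∘ f = q2 ∘ g ->
    exists u : Hom P Q, (u ∘ i1 = q1 /\ u ∘ i2 = q2) /\
      forall u' : Hom P Q, u' ∘ i1 = q1 -> u' ∘ i2 = q2 -> u' = u.

(* all finite limits  <=>  terminal object + pullbacks *)
Definition HasFiniteLimits (C : Category) : Prop :=
  (exists t : Ob C, forall a : Ob C,
      exists h : Hom a t, forall h' : Hom a t, h' = h) /\
  (forall (a b c : Ob C) (f : Hom a c) (g : Hom b c),
      exists P (p1 : Hom P a) (p2 : Hom P b), IsPullback f g p1 p2).

(* all finite colimits  <=>  initial object + pushouts *)
Definition HasFiniteColimits (C : Category) : Prop :=
  (exists i : Ob C, forall a : Ob C,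
      exists h : Hom i a, forall h' : Hom i a, h' = h) /\
  (forall (a b c : Ob C) (f : Hom c a) (g : Hom c b),
      exists P (i1 : Hom a P) (i2 : Hom b P), IsPushout f g i1 i2).

Definition IsRetract {C : Category} {a b c d : Ob C}
  (f : Hom a b) (g : Hom c d) : Prop :=
  exists (i1 : Hom a c) (r1 : Hom c a) (i2 : Hom b d) (r2 : Hom d b),
    r1 ∘ i1 = idm a /\ r2 ∘ i2 = idm b /\
    g ∘ i1 = i2 ∘ f /\ f ∘ r1 = r2 ∘ g.

Definition Hat {C : Category} (S : MorClass C) : MorClass C :=
  fun a b f => exists c d (g : Hom c d), S c d g /\ IsRetract f g.

Definition RetractClosed {C : Category} (S : MorClass C) : Prop :=
  forall a b c d (f : Hom a b) (g : Hom c d), S c d g -> IsRetract f g -> S a b f.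

Definition LLP {C : Category} {a b c d : Ob C} (i : Hom a b) (p : Hom c d) : Prop :=
  forall (u : Hom a c) (v : Hom b d), p ∘ u = v ∘ i ->
    exists h : Hom b c, h ∘ i = u /\ p ∘ h = v.

Record IsModelStructure (C : Category) (W Cof Fib : MorClass C) : Prop := {
  ms_finlim : HasFiniteLimits C;
  ms_fincolim : HasFiniteColimits C;
  ms_2of3 : forall (a b c : Ob C) (f : Hom a b) (g : Hom b c),
      (W _ _ f -> W _ _ g -> W _ _ (g ∘ f)) /\
      (W _ _ f -> W _ _ (g ∘ f) -> W _ _ g) /\
      (W _ _ g -> W _ _ (g ∘ f) -> W _ _ f);
  ms_retW : RetractClosed W;
  ms_retCof : RetractClosed Cof;
  ms_retFib : RetractClosed Fib;
  ms_lift1 : forall (a b c d : Ob C) (i : Hom a b) (p : Hom c d),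
      Cof _ _ i -> Fib _ _ p -> W _ _ p -> LLP i p;
  ms_lift2 : forall (a b c d : Ob C) (i : Hom a b) (p : Hom c d),
      Cof _ _ i -> W _ _ i -> Fib _ _ p -> LLP i p;
  ms_fact1 : forall (a b : Ob C) (f : Hom a b), exists c (i : Hom a c) (p : Hom c b),
      Cof _ _ i /\ Fib _ _ p /\ W _ _ p /\ f = p ∘ i;
  ms_fact2 : forall (a b : Ob C) (f : Hom a b), exists c (j : Hom a c) (q : Hom c b),
      Cof _ _ j /\ W _ _ j /\ Fib _ _ q /\ f = q ∘ j
}.

Record ModelCategory := {
  mc_cat : Category;
  WE : MorClass mc_cat;
  Cof : MorClass mc_cat;
  Fib : MorClass mc_cat;
  mc_model : IsModelStructure WE Cof Fib
}.

Arguments WE M {a b} f : rename.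
Arguments Cof M {a b} f : rename.
Arguments Fib M {a b} f : rename.

Record Functor (C D : Category) := {
  fobj : Ob C -> Ob D;
  fmap : forall a b : Ob C, Hom a b -> Hom (fobj a) (fobj b);
  fmap_id : forall a, fmap (idm a) = idm (fobj a);
  fmap_comp : forall a b c (f : Hom a b) (g : Hom b c),
      fmap (g ∘ f) = fmap g ∘ fmap f
}.

Arguments fobj {C D} F a : rename.
Arguments fmap {C D} F {a b} f : rename.

Record Adjunction {C D : Category} (F : Functor C D) (G : Functor D C) := {
  adj_unit : forall a : Ob C, Hom a (fobj G (fobj F a));
  adj_counit : forall m : Ob D, Hom (fobj F (fobj G m)) m;
  adj_unit_nat : forall a b (f : Hom a b),
      fmap G (fmap F f) ∘ adj_unit a = adj_unit b ∘ f;
  adj_counit_nat : forall m n (g : Hom m n),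
      g ∘ adj_counit m = adj_counit n ∘ fmap F (fmap G g);
  adj_tri1 : forall a, adj_counit (fobj F a) ∘ fmap F (adj_unit a) = idm (fobj F a);
  adj_tri2 : forall m, fmap G (adj_counit m) ∘ adj_unit (fobj G m) = idm (fobj G m)
}.

Definition FPre {C D : Category} (F : Functor C D) (S : MorClass D) : MorClass C :=
  fun a b f => S _ _ (fmap F f).

Definition FImage {C D : Category} (G : Functor C D) (S : MorClass C) : MorClass D :=
  fun c d f => exists a b (s : Hom a b), S a b s /\
    existT (fun x => { y : Ob D & Hom x y }) (fobj G a)
      (existT (fun y => Hom (fobj G a) y) (fobj G b) (fmap G s))
    = existT (fun x => { y : Ob D & Hom x y }) c
      (existT (fun y => Hom c y) d f).

(* An ordinal lambda > 0 is represented by a type I with a strict well-order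
   lt and least element i0. *)
Definition IsOrdinal {I : Type} (lt : I -> I -> Prop) (i0 : I) : Prop :=
  (forall i, ~ lt i i) /\
  (forall i j k, lt i j -> lt j k -> lt i k) /\
  (forall i j, lt i j \/ i = j \/ lt j i) /\
  well_founded lt /\
  (forall i, i = i0 \/ lt i0 i).

(* A functor Y : lambda^op -> C *)
Record Tower (C : Category) (I : Type) (lt : I -> I -> Prop) := {
  Yob : I -> Ob C;
  Ymap : forall i j, lt j i -> Hom (Yob i) (Yob j);
  Ymap_comp : forall i j k (h1 : lt j i) (h2 : lt k j) (h3 : lt k i),
      Ymap h2 ∘ Ymap h1 = Ymap h3
}.

Arguments Yob {C I lt} t i : rename.
Arguments Ymap {C I lt} t {i j} h : rename.

Definition IsCone {C : Category} {I : Type} {lt : I -> I -> Prop}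
  (Y : Tower C lt) (P : I -> Prop) (L : Ob C)
  (pi : forall i, P i -> Hom L (Yob Y i)) : Prop :=
  forall i j (hi : P i) (hj : P j) (h : lt j i), Ymap Y h ∘ pi i hi = pi j hj.

Arguments IsCone {C I lt} Y P L pi.

Definition IsLimitCone {C : Category} {I : Type} {lt : I -> I -> Prop}
  (Y : Tower C lt) (P : I -> Prop) (L : Ob C)
  (pi : forall i, P i -> Hom L (Yob Y i)) : Prop :=
  IsCone Y P L pi /\
  forall L' (pi' : forall i, P i -> Hom L' (Yob Y i)), IsCone Y P L' pi' ->
    exists u : Hom L' L, (forall i hi, pi i hi ∘ u = pi' i hi) /\
      forall u' : Hom L' L, (forall i hi, pi i hi ∘ u' = pi' i hi) -> u' = u.

Arguments IsLimitCone {C I lt} Y P L pi.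

(* Y is an S-Postnikov tower diagram:
   - successor steps Y_{b+1} -> Y_b are pullbacks of maps of S;
   - Y_g = lim_{b<g} Y_b at limit ordinals g < lambda. *)
Definition IsPostTower {C : Category} (S : MorClass C) {I : Type}
  {lt : I -> I -> Prop} (Y : Tower C lt) : Prop :=
  (forall b s (hs : lt b s), (forall d, ~ (lt b d /\ lt d s)) ->
     exists xa xb (x : Hom xa xb), S xa xb x /\
       exists (g : Hom (Yob Y b) xb) (k : Hom (Yob Y s) xa),
         IsPullback x g k (Ymap Y hs)) /\
  (forall g, (exists b, lt b g) -> (forall b, lt b g -> exists d, lt b d /\ lt d g) ->
     IsLimitCone Y (fun b => lt b g) (Yob Y g) (fun b (h : lt b g) => Ymap Y h)).

(* Post_S: the morphisms lim_{b<lambda} Y_b -> Y_0 (for any limit cone) *)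
Definition Post {C : Category} (S : MorClass C) : MorClass C :=
  fun a b f => exists (I : Type) (lt : I -> I -> Prop) (i0 : I) (Y : Tower C lt),
    IsOrdinal lt i0 /\ IsPostTower S Y /\
    exists pi : forall i, Hom a (Yob Y i),
      IsLimitCone Y (fun _ => True) a (fun i _ => pi i) /\
      exists e : Yob Y i0 = b, f = eq_rect (Yob Y i0) (fun o => Hom a o) (pi i0) b e.

Arguments Post {C} S a b f.
Arguments Hat {C} S a b f.
Arguments FPre {C D} F S a b f : rename.
Arguments FImage {C D} G S c d f : rename.
Arguments ClassInter {C} S T a b f.

Definition IsPostnikovPresentation (M : ModelCategory) (X Z : MorClass (mc_cat M)) : Prop :=
  ClassEq (@Fib M) (Hat (Post X)) /\
  ClassEq (ClassInter (@Fib M) (@WE M)) (Hat (Post Z)) /\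
  (forall (a b : Ob (mc_cat M)) (f : Hom a b), exists c (i : Hom a c) (p : Hom c b),
      Cof M i /\ Post Z _ _ p /\ f = p ∘ i) /\
  (forall (a b : Ob (mc_cat M)) (f : Hom a b), exists c (j : Hom a c) (q : Hom c b),
      Cof M j /\ WE M j /\ Post X _ _ q /\ f = q ∘ j).

Definition IsQuillenPair {C D : Category} (CofC FibC : MorClass C)
  (CofD FibD : MorClass D) (F : Functor C D) (G : Functor D C)
  (adj : Adjunction F G) : Prop :=
  (forall (a b : Ob C) (f : Hom a b), CofC a b f -> CofD _ _ (fmap F f)) /\
  (forall (m n : Ob D) (g : Hom m n), FibD m n g -> FibC _ _ (fmap G g)).

From Stdlib Require Import Classical ClassicalEpsilon FunctionalExtensionality ProofIrrelevance.

(* Everything is transported along the adjunction: i lifts against G p iff F i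
   lifts against p, and the right adjoint G carries S-Postnikov towers to
   G(S)-Postnikov towers.  The left lifting property against a class S passes
   to all S-Postnikov towers by transfinite recursion up the tower, choosing
   lifts through the pullbacks at successor stages and through the limit cones
   at limit stages.  Hence maps in C lift against Post_{G(Z)}, and maps in
   C /\ W against Post_{G(X)}.  The two factorizations and the retract argument
   give the remaining lifting axiom and identify Post_{G(Z)} as acyclic
   fibrations; 2-out-of-3 and retract closure of W and C come from M since F is
   a functor. *)

Section Retracts.
Context {C : Category}.

Lemma retract_refl {a b : Ob C} (f : Hom a b) : IsRetract f f.
Proof.
  exists (idm a), (idm a), (idm b), (idm b).
  repeat split; rewrite ?comp_id_l, ?comp_id_r; reflexivity.
Qed.

Lemma retract_trans {a b c d e k : Ob C} {f : Hom a b} {g : Hom c d} {h : Hom e k} :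
  IsRetract f g -> IsRetract g h -> IsRetract f h.
Proof.
  intros (i1 & r1 & i2 & r2 & H1 & H2 & H3 & H4) (j1 & s1 & j2 & s2 & K1 & K2 & K3 & K4).
  exists (j1 ∘ i1), (r1 ∘ s1), (j2 ∘ i2), (r2 ∘ s2). repeat split.
  - rewrite <- comp_assoc, (comp_assoc i1 j1 s1), K1, comp_id_l; exact H1.
  - rewrite <- comp_assoc, (comp_assoc i2 j2 s2), K2, comp_id_l; exact H2.
  - rewrite comp_assoc, K3, <- comp_assoc, H3, comp_assoc; reflexivity.
  - rewrite comp_assoc, H4, <- comp_assoc, K4, comp_assoc; reflexivity.
Qed.

Lemma Hat_incl (S : MorClass C) : SubClass S (Hat S).
Proof. intros a b f Hf. exists a, b, f. split; [exact Hf | apply retract_refl]. Qed.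

Lemma Hat_retract_closed (S : MorClass C) : RetractClosed (Hat S).
Proof.
  intros a b c d f g (e & k & h & Hh & Hgh) Hfg.
  exists e, k, h. split; [exact Hh | exact (retract_trans Hfg Hgh)].
Qed.

Lemma LLP_retract {A B a b c d : Ob C} {i : Hom A B} {f : Hom a b} {g : Hom c d} :
  LLP i g -> IsRetract f g -> LLP i f.
Proof.
  intros Hlift (i1 & r1 & i2 & r2 & H1 & H2 & H3 & H4) u v Hsq.
  destruct (Hlift (i1 ∘ u) (i2 ∘ v)) as (h & Hh1 & Hh2).
  { rewrite comp_assoc, H3, <- comp_assoc, Hsq, comp_assoc. reflexivity. }
  exists (r1 ∘ h). split.
  - rewrite <- comp_assoc, Hh1, comp_assoc, H1, comp_id_l. reflexivity.
  - rewrite comp_assoc, H4, <- comp_assoc, Hh2, comp_assoc, H2, comp_id_l. reflexivity.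
Qed.

Lemma LLP_Hat {A B : Ob C} (i : Hom A B) (S : MorClass C) :
  (forall a b f, S a b f -> LLP i f) -> forall a b f, Hat S a b f -> LLP i f.
Proof. intros HS a b f (c & d & g & Hg & Hfg). exact (LLP_retract (HS _ _ _ Hg) Hfg). Qed.

Lemma retract_of_factor {a b c : Ob C} {f : Hom a b} {j : Hom a c} {q : Hom c b} :
  f = q ∘ j -> LLP j f -> IsRetract f q.
Proof.
  intros Hf Hlift.
  destruct (Hlift (idm a) q) as (h & Hh1 & Hh2); [rewrite comp_id_r; exact Hf|].
  exists j, h, (idm b), (idm b).
  rewrite !comp_id_l. auto.
Qed.

End Retracts.

Lemma retract_fmap {C D : Category} (F : Functor C D) {a b c d : Ob C}
  {f : Hom a b} {g : Hom c d} :
  IsRetract f g -> IsRetract (fmap F f) (fmap F g).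
Proof.
  intros (i1 & r1 & i2 & r2 & H1 & H2 & H3 & H4).
  exists (fmap F i1), (fmap F r1), (fmap F i2), (fmap F r2).
  rewrite <- !fmap_comp, H1, H2, H3, H4, !fmap_id. auto.
Qed.

Lemma FPre_retract_closed {C D : Category} (F : Functor C D) {S : MorClass D} :
  RetractClosed S -> RetractClosed (FPre F S).
Proof. intros HS a b c d f g Hg Hfg. exact (HS _ _ _ _ _ _ Hg (retract_fmap F Hfg)). Qed.

Lemma FImage_fmap {C D : Category} (G : Functor C D) {S : MorClass C} {a b : Ob C}
  {s : Hom a b} : S a b s -> FImage G S _ _ (fmap G s).
Proof. intros Hs. exists a, b, s. split; [exact Hs | reflexivity]. Qed.

Lemma LLP_FImage {C D : Category} (G : Functor C D) (S : MorClass C) {A B : Ob D}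
  (i : Hom A B) :
  (forall a b s, S a b s -> LLP i (fmap G s)) -> forall c d f, FImage G S c d f -> LLP i f.
Proof.
  intros HS c d f (a & b & s & Hs & E).
  change (LLP i (projT2 (projT2 (existT (fun x => {y : Ob D & Hom x y}) c
                                  (existT (fun y => Hom c y) d f))))).
  rewrite <- E. exact (HS _ _ _ Hs).
Qed.

Section Adjunction.
Context {C D : Category} {F : Functor C D} {G : Functor D C} (adj : Adjunction F G).

Definition transpose {Q : Ob C} {m : Ob D} (f : Hom (fobj F Q) m) : Hom Q (fobj G m) :=
  fmap G f ∘ adj_unit adj Q.

Definition untranspose {Q : Ob C} {m : Ob D} (g : Hom Q (fobj G m)) : Hom (fobj F Q) m :=
  adj_counit adj m ∘ fmap F g.

Lemma untransposeK {Q m} (g : Hom Q (fobj G m)) : transpose (untranspose g) = g.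
Proof.
  unfold transpose, untranspose.
  rewrite fmap_comp, <- comp_assoc, adj_unit_nat, comp_assoc, adj_tri2, comp_id_l.
  reflexivity.
Qed.

Lemma transpose_comp_l {Q m n} (f : Hom (fobj F Q) m) (k : Hom m n) :
  transpose (k ∘ f) = fmap G k ∘ transpose f.
Proof. unfold transpose. rewrite fmap_comp, comp_assoc. reflexivity. Qed.

Lemma transpose_comp_r {Q Q' m} (f : Hom (fobj F Q) m) (h : Hom Q' Q) :
  transpose (f ∘ fmap F h) = transpose f ∘ h.
Proof.
  unfold transpose. rewrite fmap_comp, <- comp_assoc, adj_unit_nat, comp_assoc.
  reflexivity.
Qed.

Lemma untranspose_comp_l {Q m n} (g : Hom Q (fobj G m)) (k : Hom m n) :
  untranspose (fmap G k ∘ g) = k ∘ untranspose g.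
Proof.
  unfold untranspose. rewrite fmap_comp, comp_assoc, <- adj_counit_nat, comp_assoc.
  reflexivity.
Qed.

Lemma untranspose_comp_r {Q Q' m} (g : Hom Q (fobj G m)) (h : Hom Q' Q) :
  untranspose (g ∘ h) = untranspose g ∘ fmap F h.
Proof. unfold untranspose. rewrite fmap_comp, comp_assoc. reflexivity. Qed.

Lemma LLP_adjoint {A B : Ob C} {c d : Ob D} (i : Hom A B) (z : Hom c d) :
  LLP (fmap F i) z -> LLP i (fmap G z).
Proof.
  intros Hlift u v Hsq.
  destruct (Hlift (untranspose u) (untranspose v)) as (l & Hl1 & Hl2).
  { rewrite <- untranspose_comp_l, Hsq, untranspose_comp_r. reflexivity. }
  exists (transpose l). split.
  - rewrite <- transpose_comp_r, Hl1, untransposeK. reflexivity.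
  - rewrite <- transpose_comp_l, Hl2, untransposeK. reflexivity.
Qed.

Lemma pullback_fmap_radjoint {a b c P : Ob D} {f : Hom a c} {g : Hom b c}
  {p1 : Hom P a} {p2 : Hom P b} :
  IsPullback f g p1 p2 -> IsPullback (fmap G f) (fmap G g) (fmap G p1) (fmap G p2).
Proof.
  intros [Hc Hu]. split.
  - rewrite <- !fmap_comp, Hc. reflexivity.
  - intros Q q1 q2 Hq.
    destruct (Hu _ (untranspose q1) (untranspose q2)) as (w & (Hw1 & Hw2) & Hw).
    { rewrite <- !untranspose_comp_l, Hq. reflexivity. }
    exists (transpose w). split; [split|].
    + rewrite <- transpose_comp_l, Hw1, untransposeK. reflexivity.
    + rewrite <- transpose_comp_l, Hw2, untransposeK. reflexivity.
    + intros w' H1 H2. rewrite <- (untransposeK w'). f_equal. apply Hw.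
      * rewrite <- untranspose_comp_l, H1. reflexivity.
      * rewrite <- untranspose_comp_l, H2. reflexivity.
Qed.

Definition tower_fmap {I : Type} {lt : I -> I -> Prop} (Y : Tower D lt) : Tower C lt.
Proof.
  refine {| Yob := fun i => fobj G (Yob Y i);
            Ymap := fun i j h => fmap G (Ymap Y h) |}.
  intros i j k h1 h2 h3. rewrite <- fmap_comp, (Ymap_comp Y h1 h2 h3). reflexivity.
Defined.

Lemma limit_cone_fmap_radjoint {I : Type} {lt : I -> I -> Prop} {Y : Tower D lt}
  {P : I -> Prop} {L} {pr : forall i, P i -> Hom L (Yob Y i)} :
  IsLimitCone Y P L pr ->
  IsLimitCone (tower_fmap Y) P (fobj G L) (fun i hi => fmap G (pr i hi)).
Proof.
  intros [Hc Hu]. split.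
  - intros i j hi hj h. simpl. rewrite <- fmap_comp, Hc. reflexivity.
  - intros L' pr' Hc'.
    destruct (Hu _ (fun i hi => untranspose (pr' i hi))) as (w & Hw1 & Hw).
    { intros i j hi hj h. rewrite <- untranspose_comp_l. f_equal. apply (Hc' i j hi hj h). }
    exists (transpose w). split.
    + intros i hi. simpl. rewrite <- transpose_comp_l, Hw1, untransposeK. reflexivity.
    + intros w' H. rewrite <- (untransposeK w'). f_equal. apply Hw.
      intros i hi. rewrite <- untranspose_comp_l. f_equal. apply H.
Qed.

End Adjunction.

Lemma pullback_ext {C : Category} {a b c P Q : Ob C} {f : Hom a c} {g : Hom b c}
  {p1 : Hom P a} {p2 : Hom P b} {w w' : Hom Q P} :
  IsPullback f g p1 p2 -> p1 ∘ w = p1 ∘ w' -> p2 ∘ w = p2 ∘ w' -> w = w'.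
Proof.
  intros [Hc Hu] H1 H2.
  destruct (Hu Q (p1 ∘ w) (p2 ∘ w)) as (x & _ & Hx).
  { rewrite !comp_assoc, Hc. reflexivity. }
  rewrite (Hx w), (Hx w'); auto.
Qed.

Lemma limit_cone_ext {C : Category} {I : Type} {lt : I -> I -> Prop} {Y : Tower C lt}
  {P : I -> Prop} {L} {pr : forall i, P i -> Hom L (Yob Y i)} {Q : Ob C} {w w' : Hom Q L} :
  IsLimitCone Y P L pr -> (forall i hi, pr i hi ∘ w = pr i hi ∘ w') -> w = w'.
Proof.
  intros [Hc Hu] Hw.
  destruct (Hu Q (fun i hi => pr i hi ∘ w)) as (x & _ & Hx).
  { intros i j hi hj h. rewrite comp_assoc, Hc. reflexivity. }
  rewrite (Hx w), (Hx w'); auto.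
Qed.

Section PostSingleton.
Context {C : Category} {a b : Ob C} (f : Hom a b).

(* The ordinal 2 = {false < true}; the tower is f : Y_true -> Y_false. *)
Definition lt2 (x y : bool) : Prop := x = false /\ y = true.

Definition tower2_map (i j : bool) : lt2 j i -> Hom (if i then a else b) (if j then a else b) :=
  match i, j with
  | true, false => fun _ => f
  | true, true => fun h => match Bool.diff_true_false (proj1 h) with end
  | false, _ => fun h => match Bool.diff_false_true (proj2 h) with end
  end.

Definition tower2 : Tower C lt2.
Proof.
  refine {| Yob := fun t : bool => if t then a else b; Ymap := tower2_map |}.
  intros i j k h1 h2 h3; exfalso; destruct h1 as [e1 _], h2 as [_ e2]; congruence.
Defined.

Lemma IsOrdinal_lt2 : IsOrdinal lt2 false.
Proof.
  split; [|split; [|split; [|split]]].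
  - intros x [e1 e2]. congruence.
  - intros x y z [_ e1] [e2 _]. congruence.
  - intros [|] [|]; unfold lt2; auto.
  - intros x. constructor. intros y [-> _]. constructor. intros z [_ Hz]. discriminate.
  - intros [|]; [right; split; reflexivity | left; reflexivity].
Qed.

Lemma Post_incl {S : MorClass C} : S a b f -> Post S a b f.
Proof.
  intros Hf. exists bool, lt2, false, tower2.
  split; [exact IsOrdinal_lt2 | split; [split|]].
  - intros x s [-> ->] _. exists a, b, f. split; [exact Hf|].
    exists (idm b), (idm a). split; simpl.
    + rewrite comp_id_l, comp_id_r. reflexivity.
    + intros Q q1 q2 Hq. rewrite comp_id_l in Hq. exists q1.
      split; [rewrite !comp_id_l; auto|].
      intros w H1 _. rewrite comp_id_l in H1. exact H1.
  - intros g (x & [-> ->]) Hlim.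
    destruct (Hlim false (conj eq_refl eq_refl)) as (d & [_ e1] & [e2 _]). congruence.
  - exists (fun t : bool => if t return Hom a (Yob tower2 t) then idm a else f).
    split; [split|].
    + intros x y _ _ [-> ->]. apply comp_id_r.
    + intros L' pr Hc. exists (pr true Logic.I). split.
      * intros [|] []; [apply comp_id_l | exact (Hc true false _ _ (conj eq_refl eq_refl))].
      * intros w H. specialize (H true Logic.I). simpl in H. rewrite comp_id_l in H. exact H.
    + exists eq_refl. reflexivity.
Qed.

End PostSingleton.

Lemma Post_fmap_radjoint {C D : Category} {F : Functor C D} {G : Functor D C}
  (adj : Adjunction F G) {S : MorClass D} {a b} {f : Hom a b} :
  Post S a b f -> Post (FImage G S) (fobj G a) (fobj G b) (fmap G f).
Proof.
  intros (I & lt & i0 & Y & Hord & [Hsucc Hlim] & pr & Hpr & e & Hf).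
  destruct e. simpl in Hf. subst f.
  exists I, lt, i0, (tower_fmap (G:=G) Y). split; [exact Hord | split; [split|]].
  - intros b s hs Hn. destruct (Hsucc b s hs Hn) as (xa & xb & x & Hx & g & k & Hpb).
    exists (fobj G xa), (fobj G xb), (fmap G x). split; [exact (FImage_fmap G Hx)|].
    exists (fmap G g), (fmap G k). exact (pullback_fmap_radjoint adj Hpb).
  - intros g H1 H2. exact (limit_cone_fmap_radjoint adj (Hlim g H1 H2)).
  - exists (fun k => fmap G (pr k)). split.
    + exact (limit_cone_fmap_radjoint adj Hpr).
    + exists eq_refl. reflexivity.
Qed.

Section TransfiniteLifting.
Context {C : Category} {I : Type} {lt : I -> I -> Prop} (S : MorClass C) (Y : Tower C lt)
  (i0 : I) {A B a : Ob C} (i : Hom A B) (pr : forall k, Hom a (Yob Y k)) (u : Hom A a)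
  (v : Hom B (Yob Y i0)).

Hypothesis lt_wf : well_founded lt.
Hypothesis lt_irrefl : forall k, ~ lt k k.
Hypothesis lt_trans : forall j k l, lt j k -> lt k l -> lt j l.
Hypothesis lt_total : forall j k, lt j k \/ j = k \/ lt k j.
Hypothesis i0_least : forall k, k = i0 \/ lt i0 k.
Hypothesis Y_post : IsPostTower S Y.
Hypothesis S_lift : forall c d s, S c d s -> LLP i s.
Hypothesis pr_cone : forall k j (h : lt j k), Ymap Y h ∘ pr k = pr j.
Hypothesis square : pr i0 ∘ u = v ∘ i.

(* A solution at stage k of the lifting problem of i against Y_k -> Y_i0
   (equal to v itself at k = i0), compatible with the solutions [below] chosen
   at earlier stages.  These are options so that the recursion can be defined
   before knowing that a solution exists; [stage_lift_spec] shows None never occurs. *)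
Definition IsStageLift (k : I) (below : forall j, lt j k -> option (Hom B (Yob Y j)))
  (h : Hom B (Yob Y k)) : Prop :=
  h ∘ i = pr k ∘ u /\
  (forall e : i0 = k, h = eq_rect i0 (fun o => Hom B (Yob Y o)) v k e) /\
  (forall j (hj : lt j k), below j hj = Some (Ymap Y hj ∘ h)).

Definition choose_stage_lift (k : I) (below : forall j, lt j k -> option (Hom B (Yob Y j))) :
  option (Hom B (Yob Y k)) :=
  match excluded_middle_informative (exists h, IsStageLift k below h) with
  | left E => Some (proj1_sig (constructive_indefinite_description _ E))
  | right _ => None
  end.

Lemma choose_stage_lift_spec k below : (exists h, IsStageLift k below h) ->
  exists h, choose_stage_lift k below = Some h /\ IsStageLift k below h.
Proof.
  intros E. unfold choose_stage_lift.
  destruct (excluded_middle_informative _) as [E' | NE]; [|contradiction].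
  eexists; split; [reflexivity|]. exact (proj2_sig (constructive_indefinite_description _ E')).
Qed.

Definition stage_lift : forall k, option (Hom B (Yob Y k)) :=
  Fix lt_wf (fun k => option (Hom B (Yob Y k))) choose_stage_lift.

Lemma stage_lift_unfold k : stage_lift k = choose_stage_lift k (fun j _ => stage_lift j).
Proof.
  apply (Fix_eq lt_wf (fun k => option (Hom B (Yob Y k)))).
  intros x f g Hfg.
  replace g with f; [reflexivity|].
  apply functional_extensionality_dep; intro j.
  apply functional_extensionality_dep; intro hj. apply Hfg.
Qed.

Definition IsLiftAt (k : I) (h : Hom B (Yob Y k)) : Prop :=
  IsStageLift k (fun j _ => stage_lift j) h.

Lemma not_lt_i0 j : ~ lt j i0.
Proof.
  intros hj. destruct (i0_least j) as [-> | H]; [exact (lt_irrefl _ hj)|].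
  exact (lt_irrefl _ (lt_trans _ _ _ H hj)).
Qed.

Lemma lift_at_i0 : IsLiftAt i0 v.
Proof.
  split; [symmetry; exact square | split].
  - intros e. rewrite (proof_irrelevance _ e eq_refl). reflexivity.
  - intros j hj. destruct (not_lt_i0 _ hj).
Qed.

Lemma lift_at_successor {b k} (hbk : lt b k) {hb : Hom B (Yob Y b)} :
  (forall d, ~ (lt b d /\ lt d k)) -> stage_lift b = Some hb -> IsLiftAt b hb ->
  exists h, IsLiftAt k h.
Proof.
  intros Hsucc Eb (Hb_sq & _ & Hb_below).
  destruct (proj1 Y_post b k hbk Hsucc) as (xa & xb & x & Hx & g & l & Hpb).
  assert (Hsq : x ∘ (l ∘ (pr k ∘ u)) = (g ∘ hb) ∘ i).
  { rewrite comp_assoc, (proj1 Hpb), <- !comp_assoc, (comp_assoc u (pr k)), pr_cone, Hb_sq.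
    reflexivity. }
  destruct (S_lift _ _ _ Hx _ _ Hsq) as (m & Hm_i & Hm_x).
  destruct (proj2 Hpb B m hb Hm_x) as (h & (Hh_l & Hh_b) & _).
  exists h. split; [|split].
  - apply (pullback_ext Hpb).
    + rewrite comp_assoc, Hh_l, Hm_i. reflexivity.
    + rewrite !comp_assoc, Hh_b, pr_cone. exact Hb_sq.
  - intros e. exfalso. subst k. exact (not_lt_i0 _ hbk).
  - intros j hj. destruct (lt_total j b) as [hjb | [-> | hbj]].
    + rewrite (Hb_below j hjb), <- Hh_b, comp_assoc, (Ymap_comp Y hbk hjb hj). reflexivity.
    + rewrite Eb, <- Hh_b, (proof_irrelevance _ hj hbk). reflexivity.
    + destruct (Hsucc j (conj hbj hj)).
Qed.

Lemma stage_lift_cone {P : I -> Prop} :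
  (forall j, P j -> exists h, stage_lift j = Some h /\ IsLiftAt j h) ->
  exists hs : forall j, P j -> Hom B (Yob Y j),
    IsCone Y P B hs /\
    forall j (hj : P j), stage_lift j = Some (hs j hj) /\ IsLiftAt j (hs j hj).
Proof.
  intros Hdef.
  pose (hs := fun j hj => proj1_sig (constructive_indefinite_description _ (Hdef j hj))).
  assert (Hhs : forall j hj, stage_lift j = Some (hs j hj) /\ IsLiftAt j (hs j hj)).
  { intros j hj. exact (proj2_sig (constructive_indefinite_description _ (Hdef j hj))). }
  clearbody hs. exists hs. split.
  - intros j j' hj hj' h.
    destruct (Hhs j hj) as (_ & _ & _ & Hbelow). destruct (Hhs j' hj') as (E & _).
    rewrite (Hbelow j' h) in E. injection E as E. exact E.
  - exact Hhs.
Qed.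

Lemma lift_at_limit k :
  (exists b, lt b k) -> (forall b, lt b k -> exists d, lt b d /\ lt d k) ->
  (forall j, lt j k -> exists h, stage_lift j = Some h /\ IsLiftAt j h) ->
  exists h, IsLiftAt k h.
Proof.
  intros [b hbk] Hlimit Hdef.
  pose proof (proj2 Y_post k (ex_intro _ b hbk) Hlimit) as Hk.
  destruct (stage_lift_cone Hdef) as (hs & Hcone & Hlift).
  destruct (proj2 Hk B hs Hcone) as (h & Hh & _).
  exists h. split; [|split].
  - apply (limit_cone_ext Hk). intros j hj.
    rewrite !comp_assoc, Hh, pr_cone. exact (proj1 (proj2 (Hlift j hj))).
  - intros e. exfalso. subst k. exact (not_lt_i0 _ hbk).
  - intros j hj. rewrite Hh. exact (proj1 (Hlift j hj)).
Qed.

Lemma stage_lift_spec k : exists h, stage_lift k = Some h /\ IsLiftAt k h.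
Proof.
  induction k as [k IH] using (well_founded_ind lt_wf).
  rewrite stage_lift_unfold. apply choose_stage_lift_spec.
  destruct (i0_least k) as [-> | hk]; [exists v; exact lift_at_i0|].
  destruct (classic (exists b, lt b k /\ forall d, ~ (lt b d /\ lt d k)))
    as [(b & hbk & Hsucc) | Hnot_succ].
  - destruct (IH b hbk) as (hb & Eb & Hb).
    exact (lift_at_successor hbk Hsucc Eb Hb).
  - apply lift_at_limit; [exists i0; exact hk | | exact IH].
    intros b hbk. apply NNPP. intros Hn. apply Hnot_succ.
    exists b. split; [exact hbk|]. intros d Hd. apply Hn. exists d. exact Hd.
Qed.

Lemma lift_through_tower_limit :
  IsLimitCone Y (fun _ => True) a (fun k _ => pr k) -> exists w, w ∘ i = u /\ pr i0 ∘ w = v.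
Proof.
  intros Ha.
  destruct (@stage_lift_cone (fun _ => True) (fun k _ => stage_lift_spec k))
    as (hs & Hcone & Hlift).
  destruct (proj2 Ha B hs Hcone) as (w & Hw & _).
  exists w. split.
  - apply (limit_cone_ext Ha). intros k t. simpl.
    rewrite comp_assoc, (Hw k t). exact (proj1 (proj2 (Hlift k t))).
  - rewrite (Hw i0 Logic.I). exact (proj1 (proj2 (proj2 (Hlift i0 Logic.I))) eq_refl).
Qed.

End TransfiniteLifting.

Lemma LLP_Post {C : Category} (S : MorClass C) {A B : Ob C} (i : Hom A B) :
  (forall a b s, S a b s -> LLP i s) -> forall a b f, Post S a b f -> LLP i f.
Proof.
  intros HS a b f (I & lt & i0 & Y & Hord & HY & pr & Hpr & e & Hf) u v Hsq.
  destruct e. simpl in Hf. subst f.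
  destruct Hord as (Hirr & Htrans & Htotal & Hwf & Hleast).
  refine (lift_through_tower_limit S Y i0 i pr u v Hwf Hirr Htrans Htotal Hleast HY HS _ Hsq Hpr).
  intros k j h. exact (proj1 Hpr k j Logic.I Logic.I h).
Qed.

Section TransferredModelStructure.
Context {M : ModelCategory} {X Z : MorClass (mc_cat M)} {C : Category}
  {F : Functor C (mc_cat M)} {G : Functor (mc_cat M) C} (adj : Adjunction F G).

Local Notation WE_C := (FPre F (@WE M)).
Local Notation Cof_C := (FPre F (@Cof M)).
Local Notation Fib_C := (Hat (Post (FImage G X))).

Hypothesis presentation : @IsPostnikovPresentation M X Z.
Hypothesis PostGZ_WE : SubClass (Post (FImage G Z)) WE_C.
Hypothesis factor_cof_PostGZ : forall (a b : Ob C) (f : Hom a b),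
  exists c (i : Hom a c) (p : Hom c b), Cof_C _ _ i /\ Post (FImage G Z) _ _ p /\ f = p ∘ i.
Hypothesis factor_acyclic_cof_PostGX : forall (a b : Ob C) (f : Hom a b),
  exists c (j : Hom a c) (q : Hom c b),
    Cof_C _ _ j /\ WE_C _ _ j /\ Post (FImage G X) _ _ q /\ f = q ∘ j.

Lemma X_fibration {a b} {x : Hom a b} : X a b x -> Fib M x.
Proof.
  intros Hx. apply (proj1 presentation). apply Hat_incl. exact (Post_incl _ Hx).
Qed.

Lemma Z_acyclic_fibration {a b} {z : Hom a b} : Z a b z -> Fib M z /\ WE M z.
Proof.
  intros Hz. apply (proj1 (proj2 presentation)). apply Hat_incl. exact (Post_incl _ Hz).
Qed.

Lemma cof_LLP_PostGZ {A B a b : Ob C} {i : Hom A B} {p : Hom a b} :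
  Cof_C _ _ i -> Post (FImage G Z) _ _ p -> LLP i p.
Proof.
  intros Hi. revert a b p. apply LLP_Post, LLP_FImage. intros a b z Hz. apply (LLP_adjoint adj).
  destruct (Z_acyclic_fibration Hz) as [Hfib Hwe].
  exact (ms_lift1 (mc_model M) Hi Hfib Hwe).
Qed.

Lemma acyclic_cof_LLP_fib {A B a b : Ob C} {i : Hom A B} {p : Hom a b} :
  Cof_C _ _ i -> WE_C _ _ i -> Fib_C _ _ p -> LLP i p.
Proof.
  intros Hi Hwe. revert a b p. apply LLP_Hat, LLP_Post, LLP_FImage. intros a b x Hx.
  apply (LLP_adjoint adj). exact (ms_lift2 (mc_model M) Hi Hwe (X_fibration Hx)).
Qed.

Lemma PostGZ_fib {a b} {p : Hom a b} : Post (FImage G Z) a b p -> Fib_C a b p.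
Proof.
  intros Hp. destruct (factor_acyclic_cof_PostGX _ _ p) as (c & j & q & Hj & _ & Hq & Hpq).
  exists c, b, q. split; [exact Hq|].
  exact (retract_of_factor Hpq (cof_LLP_PostGZ Hj Hp)).
Qed.

Lemma cof_LLP_acyclic_fib {A B a b : Ob C} {i : Hom A B} {p : Hom a b} :
  Cof_C _ _ i -> Fib_C _ _ p -> WE_C _ _ p -> LLP i p.
Proof.
  intros Hi Hp Hwe.
  destruct (factor_cof_PostGZ _ _ p) as (c & j & q & Hj & Hq & Hpq).
  assert (Hj_we : WE_C _ _ j).
  { apply (ms_2of3 (mc_model M) (fmap F j) (fmap F q)); [exact (PostGZ_WE _ _ _ Hq)|].
    unfold FPre in Hwe. rewrite <- fmap_comp, <- Hpq. exact Hwe. }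
  apply (LLP_retract (cof_LLP_PostGZ Hi Hq)).
  exact (retract_of_factor Hpq (acyclic_cof_LLP_fib Hj Hj_we Hp)).
Qed.

Lemma transferred_model_structure :
  HasFiniteLimits C -> HasFiniteColimits C -> IsModelStructure WE_C Cof_C Fib_C.
Proof.
  intros Hlim Hcolim. constructor.
  - exact Hlim.
  - exact Hcolim.
  - intros a b c f g. unfold FPre. rewrite fmap_comp. exact (ms_2of3 (mc_model M) _ _).
  - exact (FPre_retract_closed F (ms_retW (mc_model M))).
  - exact (FPre_retract_closed F (ms_retCof (mc_model M))).
  - apply Hat_retract_closed.
  - intros a b c d i p. exact (cof_LLP_acyclic_fib (p:=p)).
  - intros a b c d i p Hi Hwe Hp. exact (acyclic_cof_LLP_fib Hi Hwe Hp).
  - intros a b f. destruct (factor_cof_PostGZ _ _ f) as (c & i & p & Hi & Hp & Hf).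
    exists c, i, p. repeat split; [exact Hi | exact (PostGZ_fib Hp) | exact (PostGZ_WE _ _ _ Hp) | exact Hf].
  - intros a b f. destruct (factor_acyclic_cof_PostGX _ _ f) as (c & j & q & Hj & Hwe & Hq & Hf).
    exists c, j, q. repeat split; [exact Hj | exact Hwe | exact (Hat_incl _ _ _ _ Hq) | exact Hf].
Qed.

Lemma transferred_Quillen_pair : IsQuillenPair Cof_C Fib_C (@Cof M) (@Fib M) adj.
Proof.
  split; [intros a b f Hf; exact Hf|].
  intros m n g Hg. destruct (proj1 (proj1 presentation m n g) Hg) as (c & d & p & Hp & Hgp).
  exists (fobj G c), (fobj G d), (fmap G p).
  split; [exact (Post_fmap_radjoint adj Hp) | exact (retract_fmap G Hgp)].
Qed.

End TransferredModelStructure.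

Theorem mainTheorem18 (M : ModelCategory) (X Z : MorClass (mc_cat M))
  (C : Category) (F : Functor C (mc_cat M)) (G : Functor (mc_cat M) C)
  (adj : Adjunction F G) :
  @IsPostnikovPresentation M X Z ->
  HasFiniteLimits C -> HasFiniteColimits C ->
  SubClass (Post (FImage G Z)) (FPre F (@WE M)) ->
  (forall (a b : Ob C) (f : Hom a b), exists c (i : Hom a c) (p : Hom c b),
      FPre F (@Cof M) _ _ i /\ Post (FImage G Z) _ _ p /\ f = p ∘ i) ->
  (forall (a b : Ob C) (f : Hom a b), exists c (j : Hom a c) (q : Hom c b),
      FPre F (@Cof M) _ _ j /\ FPre F (@WE M) _ _ j /\
      Post (FImage G X) _ _ q /\ f = q ∘ j) ->
  IsModelStructure (FPre F (@WE M)) (FPre F (@Cof M)) (Hat (Post (FImage G X))) /\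
  IsQuillenPair (FPre F (@Cof M)) (Hat (Post (FImage G X))) (@Cof M) (@Fib M) adj.
Proof.
  intros Hpres Hlim Hcolim HZ Hfact_cof Hfact_acyclic. split.
  - exact (transferred_model_structure adj Hpres HZ Hfact_cof Hfact_acyclic Hlim Hcolim).
  - exact (transferred_Quillen_pair adj Hpres).
Qed.
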